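(* Let $Y_1,Y_2$ be nonzero ordinary differential operators (with coefficients in $\mathbb C(x)$), and set $X=Y_1Y_2$ and $\hat X=Y_2Y_1$. Then $X$ and $\hat X$ have the same true rank.
   Context: The rank of a set of ordinary differential operators is the greatest common divisor of the orders of its elements. The true rank of an ordinary differential operator is the rank of its centralizer in the ring of ordinary differential operators (here, those with coefficients in $\mathbb C(x)$). *)

From mathcomp Require Import all_boot all_algebra.
From mathcomp Require Import complex fraction.
From mathcomp Require Import Rstruct.
Set Implicit Arguments. Unset Strict Implicit. Unset Printing Implicit Defensive.
Import GRing.Theory.
Local Open Scope ring_scope.

Definition Cplx : fieldType := complex Rdefinitions.R.

Definition Kx : fieldType := {fraction {poly Cplx}}.

(* The derivation d/dx on C(x): for f = n/d (any representative),
   f' = (n' d - n d') / d^2.  This is independent of the representative. *)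
Definition fderiv (f : Kx) : Kx :=
  let r := repr f in
  let n := \n_r in let d := \d_r in
  tofrac (n^`() * d - n * d^`()) / tofrac (d ^+ 2).

(* An ordinary differential operator  L = sum_i a_i D^i  (a_i in C(x))
   is represented by the polynomial  sum_i a_i 'X^i  in {poly Kx};
   addition and C(x)-scaling on the left are the polynomial ones, but the
   multiplication is the one of the ring of differential operators
   (D a = a D + a'). *)
Definition diffop := {poly Kx}.

(* D * M *)
Definition dop_D (M : diffop) : diffop := map_poly fderiv M + M * 'X.

Definition dop_mul (L M : diffop) : diffop :=
  \sum_(i < size L) L`_i *: iter i dop_D M.

Definition dop_order (L : diffop) : nat := (size L).-1.

Definition centralizer (L : diffop) : diffop -> Prop :=
  fun M => dop_mul L M = dop_mul M L.

Definition is_rank (S : diffop -> Prop) (r : nat) : Prop :=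
  (forall M, S M -> (r %| dop_order M)%N) /\
  (forall d : nat, (forall M, S M -> (d %| dop_order M)%N) -> (d %| r)%N).

Definition is_true_rank (L : diffop) (r : nat) : Prop :=
  is_rank (centralizer L) r.

(* The map M |-> Y1 M Y2 sends the centralizer of Y2 Y1 into the centralizer of
   Y1 Y2 and raises orders by ord Y1 + ord Y2, which is itself the order of an
   element of that centralizer (namely Y1 Y2).  Hence any common divisor of the
   orders in the centralizer of Y1 Y2 divides all orders in the centralizer of
   Y2 Y1, and symmetrically, so both centralizers have the same rank.  Besides
   this, one only needs that operator multiplication is associative and that
   orders add, which holds for the operators over any field with a derivation;
   d/dx on C(x) is one. *)

From mathcomp Require Import all_boot all_algebra.
From mathcomp Require Import fraction generic_quotient ring.

Set Implicit Arguments.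
Unset Strict Implicit.
Unset Printing Implicit Defensive.

Import GRing.Theory.
Local Open Scope ring_scope.
Local Open Scope quotient_scope.

Lemma quotient_ruleD (F : fieldType) (n1 d1 n2 d2 n1' d1' n2' d2' : F) :
  d1 != 0 -> d2 != 0 ->
  ((n1' * d2 + n1 * d2' + (n2' * d1 + n2 * d1')) * (d1 * d2)
     - (n1 * d2 + n2 * d1) * (d1' * d2 + d1 * d2')) / (d1 * d2) ^+ 2
  = (n1' * d1 - n1 * d1') / d1 ^+ 2 + (n2' * d2 - n2 * d2') / d2 ^+ 2.
Proof. by move=> d1_neq0 d2_neq0; field; rewrite d1_neq0 d2_neq0. Qed.

Lemma quotient_ruleM (F : fieldType) (n1 d1 n2 d2 n1' d1' n2' d2' : F) :
  d1 != 0 -> d2 != 0 ->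
  ((n1' * n2 + n1 * n2') * (d1 * d2) - n1 * n2 * (d1' * d2 + d1 * d2')) / (d1 * d2) ^+ 2
  = (n1' * d1 - n1 * d1') / d1 ^+ 2 * (n2 / d2)
    + n1 / d1 * ((n2' * d2 - n2 * d2') / d2 ^+ 2).
Proof. by move=> d1_neq0 d2_neq0; field; rewrite d1_neq0 d2_neq0. Qed.

Section FractionDerivation.
Variable R : idomainType.
Local Notation "p %:F" := (@tofrac {poly R} p).

Definition frac_deriv_of (n d : {poly R}) : {fraction {poly R}} :=
  (n^`() * d - n * d^`())%:F / (d ^+ 2)%:F.

Definition frac_deriv (f : {fraction {poly R}}) : {fraction {poly R}} :=
  frac_deriv_of \n_(repr f) \d_(repr f).

Lemma tofrac_neq0 (p : {poly R}) : p != 0 -> p%:F != 0.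
Proof. by rewrite tofrac_eq0. Qed.

Lemma pi_ratioE (x : {ratio {poly R}}) :
  \pi_{fraction {poly R}} x = (\n_x)%:F / (\d_x)%:F.
Proof.
have dxF_neq0 := tofrac_neq0 (denom_ratioP x).
rewrite -[LHS](mulfK dxF_neq0); congr (_ / _).
have tofracE (p : {poly R}) : p%:F = \pi_{fraction {poly R}} (Ratio p 1).
  by unlock FracField.tofrac.
have pi_mulE (a b : {ratio {poly R}}) : \pi_{fraction {poly R}} (FracField.mulf a b)
    = \pi_{fraction {poly R}} a * \pi_{fraction {poly R}} b.
  exact: FracField.pi_mul.
rewrite !tofracE -pi_mulE; apply/eqmodP.
rewrite /= FracField.equivfE /FracField.mulf.
by rewrite !numden_Ratio ?mulf_neq0 ?oner_neq0 ?denom_ratioP // !mulr1 mulrC.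
Qed.

Lemma fraction_numden (f : {fraction {poly R}}) :
  exists n d, d != 0 /\ f = n%:F / d%:F.
Proof.
exists \n_(repr f), \d_(repr f); split; first exact: denom_ratioP.
by rewrite -pi_ratioE reprK.
Qed.

Lemma frac_deriv_of_equiv (n d n' d' : {poly R}) : d != 0 -> d' != 0 ->
  n * d' = n' * d -> frac_deriv_of n d = frac_deriv_of n' d'.
Proof.
move=> d_neq0 d'_neq0 E.
have E' : n^`() * d' + n * d'^`() = n'^`() * d + n' * d^`() by rewrite -!derivM E.
rewrite /frac_deriv_of; apply/eqP.
rewrite eqr_div ?tofrac_neq0 ?expf_neq0 // -!tofracM tofrac_eq -subr_eq0.
apply/eqP; transitivity
  (- (d' * d * ((n'^`() * d + n' * d^`()) - (n^`() * d' + n * d'^`()))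
      + (d'^`() * d + d^`() * d') * (n * d' - n' * d))); first by ring.
by rewrite E E' !subrr !mulr0 addr0 oppr0.
Qed.

Lemma frac_derivE (n d : {poly R}) : d != 0 ->
  frac_deriv (n%:F / d%:F) = frac_deriv_of n d.
Proof.
move=> d_neq0; rewrite /frac_deriv.
have := reprK (n%:F / d%:F); move: (repr _) => r; rewrite pi_ratioE => /eqP.
have dr_neq0 := denom_ratioP r.
rewrite eqr_div ?tofrac_neq0 // -!tofracM tofrac_eq => /eqP E.
exact: frac_deriv_of_equiv.
Qed.

Lemma frac_derivD (f g : {fraction {poly R}}) :
  frac_deriv (f + g) = frac_deriv f + frac_deriv g.
Proof.
have [n1 [d1 [d1_neq0 ->]]] := fraction_numden f.
have [n2 [d2 [d2_neq0 ->]]] := fraction_numden g.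
have d1F_neq0 := tofrac_neq0 d1_neq0; have d2F_neq0 := tofrac_neq0 d2_neq0.
have d12_neq0 : d1 * d2 != 0 by rewrite mulf_neq0.
rewrite (addf_div _ _ d1F_neq0 d2F_neq0) -!tofracM -tofracD.
rewrite (frac_derivE _ d12_neq0) (frac_derivE _ d1_neq0) (frac_derivE _ d2_neq0).
rewrite /frac_deriv_of !(tofracD, tofracB, tofracN, tofracM, tofracXn, derivM, derivD).
exact: quotient_ruleD d1F_neq0 d2F_neq0.
Qed.

Lemma frac_derivM (f g : {fraction {poly R}}) :
  frac_deriv (f * g) = frac_deriv f * g + f * frac_deriv g.
Proof.
have [n1 [d1 [d1_neq0 ->]]] := fraction_numden f.
have [n2 [d2 [d2_neq0 ->]]] := fraction_numden g.
have d1F_neq0 := tofrac_neq0 d1_neq0; have d2F_neq0 := tofrac_neq0 d2_neq0.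
have d12_neq0 : d1 * d2 != 0 by rewrite mulf_neq0.
rewrite mulf_div -!tofracM.
rewrite (frac_derivE _ d12_neq0) (frac_derivE _ d1_neq0) (frac_derivE _ d2_neq0).
rewrite /frac_deriv_of !(tofracD, tofracB, tofracN, tofracM, tofracXn, derivM, derivD).
exact: quotient_ruleM d1F_neq0 d2F_neq0.
Qed.

End FractionDerivation.

Section DifferentialOperators.
Variables (K : fieldType) (delta : K -> K).
Hypothesis deltaD : {morph delta : a b / a + b}.
Hypothesis deltaM : forall a b, delta (a * b) = delta a * b + a * delta b.

(* [ore_mul] is the product of the Ore extension K[D; delta]: D a = a D + delta a. *)
Definition ore_D (M : {poly K}) : {poly K} := map_poly delta M + M * 'X.

Definition ore_mul (L M : {poly K}) : {poly K} :=
  \sum_(i < size L) L`_i *: iter i ore_D M.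

Lemma delta0 : delta 0 = 0.
Proof. by apply: (addIr (delta 0)); rewrite -deltaD !add0r. Qed.

Lemma coef_ore_D (M : {poly K}) j :
  (ore_D M)`_j = delta M`_j + (if j == 0%N then 0 else M`_j.-1).
Proof. by rewrite coefD coef_map_id0 ?delta0 ?coefMX. Qed.

Lemma ore_DD : {morph ore_D : M N / M + N}.
Proof.
move=> M N; apply/polyP => j; rewrite !(coefD, coef_ore_D) deltaD.
by case: (j == 0%N); rewrite ?addr0 // addrACA.
Qed.

Lemma ore_D0 : ore_D 0 = 0.
Proof.
by apply/polyP => j; rewrite coef_ore_D coef0 delta0 add0r; case: ifP; rewrite ?coef0.
Qed.

Lemma ore_DZ c (M : {poly K}) : ore_D (c *: M) = delta c *: M + c *: ore_D M.
Proof.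
apply/polyP => j; rewrite !(coefD, coefZ, coef_ore_D) deltaM mulrDr -addrA.
by case: (j == 0%N); rewrite ?mulr0.
Qed.

Lemma size_ore_D_leq (M : {poly K}) : (size (ore_D M) <= (size M).+1)%N.
Proof.
apply/leq_sizeP => -[|j] //= hj.
by rewrite coef_ore_D !nth_default ?delta0 ?add0r // ltnW.
Qed.

Lemma coef_ore_D_size (M : {poly K}) : (ore_D M)`_(size M) = lead_coef M.
Proof.
rewrite coef_ore_D nth_default ?delta0 ?add0r //.
rewrite lead_coefE; case: ifP => //; rewrite size_poly_eq0 => /eqP ->; by rewrite coef0.
Qed.

Lemma size_ore_D (M : {poly K}) : M != 0 -> size (ore_D M) = (size M).+1.
Proof.
move=> M_neq0; apply/eqP; rewrite eqn_leq size_ore_D_leq ltnNge.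
by apply: contraNN M_neq0 => ?; rewrite -lead_coef_eq0 -coef_ore_D_size nth_default.
Qed.

Lemma size_iter_ore_D i (M : {poly K}) : M != 0 ->
  size (iter i ore_D M) = (size M + i)%N.
Proof.
move=> M_neq0; elim: i => [|i IH]; first by rewrite addn0.
rewrite /= size_ore_D ?addnS ?IH // -size_poly_eq0 IH addn_eq0 size_poly_eq0.
by rewrite (negbTE M_neq0).
Qed.

Lemma ore_mul_widen n (L M : {poly K}) : (size L <= n)%N ->
  ore_mul L M = \sum_(i < n) L`_i *: iter i ore_D M.
Proof.
move=> le_L_n; rewrite /ore_mul.
rewrite (big_ord_widen _ (fun i => L`_i *: iter i ore_D M) le_L_n) big_mkcond.
apply: eq_bigr => i _; case: ltnP => // le_L_i.
by rewrite nth_default // scale0r.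
Qed.

Lemma ore_mulDl (M : {poly K}) : {morph ore_mul^~ M : L1 L2 / L1 + L2}.
Proof.
move=> L1 L2; set n := maxn (size L1) (size L2).
rewrite (@ore_mul_widen n (L1 + L2)) ?(leq_trans (size_polyD _ _)) //.
rewrite (@ore_mul_widen n L1) ?leq_maxl // (@ore_mul_widen n L2) ?leq_maxr //.
by rewrite -big_split; apply: eq_bigr => i _; rewrite coefD scalerDl.
Qed.

Lemma ore_mul0l (M : {poly K}) : ore_mul 0 M = 0.
Proof. by rewrite /ore_mul size_poly0 big_ord0. Qed.

Lemma ore_mulZl c (L M : {poly K}) : ore_mul (c *: L) M = c *: ore_mul L M.
Proof.
rewrite (@ore_mul_widen (size L)) ?size_scale_leq // scaler_sumr.
by apply: eq_bigr => i _; rewrite coefZ scalerA.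
Qed.

Lemma ore_D_mul (L M : {poly K}) : ore_D (ore_mul L M) = ore_mul (ore_D L) M.
Proof.
rewrite (@ore_mul_widen (size L).+1 (ore_D L)) ?size_ore_D_leq //.
rewrite /ore_mul (big_morph ore_D ore_DD ore_D0).
under eq_bigr => i _ do rewrite ore_DZ.
under [RHS]eq_bigr => i _ do rewrite coef_ore_D scalerDl.
rewrite !big_split /=; congr (_ + _).
  by rewrite big_ord_recr /= [L`_(size L)]nth_default // delta0 scale0r addr0.
by rewrite big_ord_recl /= scale0r add0r.
Qed.

Lemma ore_mulA (L M N : {poly K}) :
  ore_mul (ore_mul L M) N = ore_mul L (ore_mul M N).
Proof.
have iter_ore_D_mul i : iter i ore_D (ore_mul M N) = ore_mul (iter i ore_D M) N.
  by elim: i => [|i IH] //=; rewrite IH ore_D_mul.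
rewrite [ore_mul L M](@ore_mul_widen (size L)) // [RHS](@ore_mul_widen (size L)) //.
rewrite (big_morph (ore_mul^~ N) (ore_mulDl N) (ore_mul0l N)).
by apply: eq_bigr => i _; rewrite ore_mulZl iter_ore_D_mul.
Qed.

Lemma size_ore_mul (L M : {poly K}) : L != 0 -> M != 0 ->
  size (ore_mul L M) = (size L + size M).-1.
Proof.
move=> L_neq0 M_neq0.
have sizeL := polySpred L_neq0; have sizeM := polySpred M_neq0.
set s := (size L).-1 in sizeL *; set m := (size M).-1 in sizeM *.
have Ls_neq0 : L`_s != 0 by rewrite -lead_coef_eq0 in L_neq0.
have size_top : size (L`_s *: iter s ore_D M) = (m + s).+1.
  by rewrite size_scale // size_iter_ore_D // sizeM.
have size_lower : (size (\sum_(i < s) L`_i *: iter i ore_D M)%R <= m + s)%N.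
  apply/leq_sizeP => j le_ms_j; rewrite coef_sum big1 // => i _.
  rewrite coefZ [_`_j]nth_default ?mulr0 // size_iter_ore_D // sizeM addSn.
  by rewrite (leq_trans _ le_ms_j) // ltn_add2l.
rewrite (ore_mul_widen _ (eq_leq sizeL)) big_ord_recr /= addrC size_polyDl.
  by rewrite size_top sizeL sizeM addSn addnS addnC.
by rewrite size_top ltnS.
Qed.

End DifferentialOperators.

(* [dop_mul] is [ore_mul fderiv], and [fderiv] is [frac_deriv] at [R := Cplx]. *)
Lemma dop_mulA (L M N : diffop) :
  dop_mul (dop_mul L M) N = dop_mul L (dop_mul M N).
Proof. exact: (ore_mulA (@frac_derivD Cplx) (@frac_derivM Cplx)). Qed.

Lemma dop_order_mul (L M : diffop) : L != 0 -> M != 0 ->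
  dop_order (dop_mul L M) = (dop_order L + dop_order M)%N.
Proof.
move=> L_neq0 M_neq0; rewrite /dop_order (size_ore_mul (@frac_derivD Cplx)) //.
by rewrite (polySpred L_neq0) (polySpred M_neq0) addSn addnS.
Qed.

Lemma dop_mul_neq0 (L M : diffop) : L != 0 -> M != 0 -> dop_mul L M != 0.
Proof.
move=> L_neq0 M_neq0; rewrite -size_poly_eq0 (size_ore_mul (@frac_derivD Cplx)) //.
by rewrite (polySpred L_neq0) addSn /= addn_eq0 size_poly_eq0 (negbTE M_neq0) andbF.
Qed.

Lemma centralizer_conj (A B M : diffop) : centralizer (dop_mul B A) M ->
  centralizer (dop_mul A B) (dop_mul A (dop_mul M B)).
Proof.
rewrite /centralizer => MBA.
have -> : dop_mul (dop_mul A B) (dop_mul A (dop_mul M B))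
        = dop_mul A (dop_mul (dop_mul (dop_mul B A) M) B) by rewrite !dop_mulA.
by rewrite MBA !dop_mulA.
Qed.

Lemma centralizer_order_dvdn_swap (A B : diffop) (d : nat) : A != 0 -> B != 0 ->
  (forall M, centralizer (dop_mul A B) M -> (d %| dop_order M)%N) ->
  forall M, centralizer (dop_mul B A) M -> (d %| dop_order M)%N.
Proof.
move=> A_neq0 B_neq0 dvd_d M cBA_M.
have [-> | M_neq0] := eqVneq M 0; first by rewrite /dop_order size_poly0 dvdn0.
have d_AB : (d %| dop_order A + dop_order B)%N.
  by rewrite -dop_order_mul // dvd_d.
have := dvd_d _ (centralizer_conj cBA_M).
by rewrite dop_order_mul ?dop_mul_neq0 // dop_order_mul // addnCA dvdn_addl.
Qed.

Lemma true_rank_swap (A B : diffop) (r : nat) : A != 0 -> B != 0 ->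
  is_true_rank (dop_mul A B) r -> is_true_rank (dop_mul B A) r.
Proof.
move=> A_neq0 B_neq0 [r_dvd r_max]; split.
  exact: centralizer_order_dvdn_swap r_dvd.
by move=> d /(centralizer_order_dvdn_swap B_neq0 A_neq0); apply: r_max.
Qed.

Theorem mainTheorem15 (Y1 Y2 : diffop) :
  Y1 != 0 -> Y2 != 0 ->
  forall r : nat,
    is_true_rank (dop_mul Y1 Y2) r <-> is_true_rank (dop_mul Y2 Y1) r.
Proof. by move=> Y1_neq0 Y2_neq0 r; split; apply: true_rank_swap. Qed.
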